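(* Let $\kappa>-1$, $\Gamma$ a constant real $n\times r$ matrix, and assume that $\kappa=1$ or $\Gamma=0$. Then the equations $$\dot X=P-(1+2\kappa)XP^TX,\qquad \dot P=(1+2\kappa)PX^TP-\Gamma+X\Lambda,\qquad \Lambda=\tfrac12\left(-2P^TP+X^T\Gamma+\Gamma^TX\right)$$ on $T^*V(n,r)$ are equivalent to the matrix equations $$\frac{d}{dt}L(\lambda)=[L(\lambda),A(\lambda)]$$ with spectral parameter $\lambda$, where $L(\lambda),A(\lambda)\in so(n+r)$ are $$L(\lambda)=\begin{pmatrix}-\lambda\Phi & X+\lambda^2\Gamma\\ -X^T-\lambda^2\Gamma^T & \lambda\kappa\Psi\end{pmatrix},\qquad A(\lambda)=\begin{pmatrix}-\Phi & \lambda\Gamma\\ -\lambda\Gamma^T & \kappa\Psi\end{pmatrix},$$ with $\Phi=PX^T-XP^T$ and $\Psi=X^TP-P^TX$.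
   Context: $V(n,r)=\{X\in M_{n,r}(\mathbb R):X^TX=\mathbf I_r\}$, and $T^*V(n,r)$ is realized as the set of pairs $(X,P)$ of real $n\times r$ matrices with $X^TX=\mathbf I_r$, $X^TP+P^TX=0$. The given equations are the Hamiltonian flow of the pendulum Hamiltonian $\frac12\operatorname{tr}(P^TP)-\frac{1+2\kappa}{2}\operatorname{tr}((XP^T)^2)+\operatorname{tr}(X^T\Gamma)$ (for $\Gamma=0$, the geodesic flow of the Jensen metric $ds^2_\kappa$). *)

From HB Require Import structures.
From mathcomp Require Import all_boot all_order all_algebra.
From mathcomp Require Import all_classical all_reals all_analysis.
Set Implicit Arguments. Unset Strict Implicit. Unset Printing Implicit Defensive.
Import Order.TTheory GRing.Theory Num.Theory.
Local Open Scope ring_scope.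

Definition mx_deriv (R : realType) (m k : nat) (F : R -> 'M[R]_(m, k)) (t : R)
  : 'M[R]_(m, k) :=
  \matrix_(i, j) derive1 (fun s => F s i j) t.

Definition mx_derivable (R : realType) (m k : nat) (F : R -> 'M[R]_(m, k)) :=
  forall t i j, derivable (fun s => F s i j) t 1.

Definition in_TVstar (R : realType) (n r : nat) (X P : 'M[R]_(n, r)) :=
  X^T *m X = 1%:M /\ X^T *m P + P^T *m X = 0.

Definition Phi (R : realType) (n r : nat) (X P : 'M[R]_(n, r)) : 'M[R]_n :=
  P *m X^T - X *m P^T.
Definition Psi (R : realType) (n r : nat) (X P : 'M[R]_(n, r)) : 'M[R]_r :=
  X^T *m P - P^T *m X.

Definition Lambda (R : realType) (n r : nat) (Gamma X P : 'M[R]_(n, r)) : 'M[R]_r :=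
  2^-1 *: (- (2 *: (P^T *m P)) + X^T *m Gamma + Gamma^T *m X).

Definition Xdot_rhs (R : realType) (n r : nat) (kappa : R) (X P : 'M[R]_(n, r))
  : 'M[R]_(n, r) :=
  P - (1 + 2 * kappa) *: (X *m P^T *m X).
Definition Pdot_rhs (R : realType) (n r : nat) (kappa : R) (Gamma X P : 'M[R]_(n, r))
  : 'M[R]_(n, r) :=
  (1 + 2 * kappa) *: (P *m X^T *m P) - Gamma + X *m Lambda Gamma X P.

Definition Lmat (R : realType) (n r : nat) (kappa : R) (Gamma : 'M[R]_(n, r))
  (lam : R) (X P : 'M[R]_(n, r)) : 'M[R]_(n + r) :=
  block_mx (- (lam *: Phi X P)) (X + lam ^+ 2 *: Gamma)
           (- X^T - lam ^+ 2 *: Gamma^T) ((lam * kappa) *: Psi X P).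
Definition Amat (R : realType) (n r : nat) (kappa : R) (Gamma : 'M[R]_(n, r))
  (lam : R) (X P : 'M[R]_(n, r)) : 'M[R]_(n + r) :=
  block_mx (- Phi X P) (lam *: Gamma)
           (- (lam *: Gamma^T)) (kappa *: Psi X P).

From HB Require Import structures.
From mathcomp Require Import all_boot all_order all_algebra.
From mathcomp Require Import all_classical all_reals all_analysis.
From mathcomp Require Import ring.
Import Order.TTheory GRing.Theory Num.Theory.
Set Implicit Arguments. Unset Strict Implicit.
Local Open Scope ring_scope.

(* Blockwise, the commutator [L(lam), A(lam)] has diagonal blocks lam Phi(X, Gamma)
   and -lam Psi(X, Gamma) and off-diagonal block Y = Phi X + kappa X Psi, which on
   T^*V(n,r) is the right-hand side of the X-equation; the derivative of L(lam) has
   diagonal blocks -lam d/dt Phi and lam kappa d/dt Psi and off-diagonal block dX/dt.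
   Along the pendulum flow d/dt Phi = -Phi(X, Gamma) and d/dt Psi = -Psi(X, Gamma),
   so the Lax equation holds as soon as kappa Psi(X, Gamma) = Psi(X, Gamma), i.e.
   when kappa = 1 or Gamma = 0.  Conversely, the Lax equation at lam = 1 gives dX/dt,
   and dP/dt is recovered from d/dt Phi and the derivative of the constraint
   X^T P + P^T X = 0: for X^T X = 1 the linear map Q |-> (Q X^T - X Q^T, X^T Q + Q^T X)
   is injective. *)

Section MatrixDerivative.
Variables (R : realType) (t : R).

Definition is_mx_derive m k (F : R -> 'M[R]_(m, k)) (D : 'M[R]_(m, k)) :=
  forall i j, is_derive t (1 : R) (fun s => F s i j) (D i j).

Lemma is_mx_derive_mx_deriv m k (F : R -> 'M[R]_(m, k)) D :
  is_mx_derive F D -> mx_deriv F t = D.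
Proof. by move=> dF; apply/matrixP => i j; rewrite mxE derive1E; apply: derive_val. Qed.

Lemma mx_derivableP m k (F : R -> 'M[R]_(m, k)) :
  mx_derivable F -> is_mx_derive F (mx_deriv F t).
Proof. by move=> dF i j; rewrite mxE derive1E; apply: derivableP. Qed.

Lemma is_mx_derive_cst m k (C : 'M[R]_(m, k)) : is_mx_derive (fun=> C) 0.
Proof. by move=> i j; rewrite mxE; apply: is_derive_cst. Qed.

Lemma is_mx_deriveD m k (F G : R -> 'M[R]_(m, k)) F' G' :
  is_mx_derive F F' -> is_mx_derive G G' -> is_mx_derive (F \+ G) (F' + G').
Proof.
move=> dF dG i j; rewrite mxE.
have -> : (fun s => (F \+ G) s i j) = (fun s => F s i j) + (fun s => G s i j).
  by apply/funext => s; rewrite /= mxE.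
exact: is_deriveD.
Qed.

Lemma is_mx_deriveZ m k (c : R) (F : R -> 'M[R]_(m, k)) F' :
  is_mx_derive F F' -> is_mx_derive (fun s => c *: F s) (c *: F').
Proof.
move=> dF i j; rewrite mxE.
have -> : (fun s => (c *: F s) i j) = c \*: (fun s => F s i j).
  by apply/funext => s; rewrite mxE.
exact: is_deriveZ.
Qed.

Lemma is_mx_deriveN m k (F : R -> 'M[R]_(m, k)) F' :
  is_mx_derive F F' -> is_mx_derive (fun s => - F s) (- F').
Proof.
move=> dF; rewrite -scaleN1r.
have -> : (fun s => - F s) = (fun s => -1 *: F s).
  by apply/funext => s; rewrite scaleN1r.
exact: is_mx_deriveZ.
Qed.

Lemma is_mx_deriveB m k (F G : R -> 'M[R]_(m, k)) F' G' :
  is_mx_derive F F' -> is_mx_derive G G' -> is_mx_derive (fun s => F s - G s) (F' - G').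
Proof. by move=> dF dG; apply: is_mx_deriveD => //; apply: is_mx_deriveN. Qed.

Lemma is_mx_derive_tr m k (F : R -> 'M[R]_(m, k)) F' :
  is_mx_derive F F' -> is_mx_derive (fun s => (F s)^T) F'^T.
Proof.
move=> dF i j; rewrite mxE.
by under eq_fun do rewrite mxE; apply: dF.
Qed.

Lemma is_mx_deriveM m k l (F : R -> 'M[R]_(m, k)) (G : R -> 'M[R]_(k, l)) F' G' :
  is_mx_derive F F' -> is_mx_derive G G' ->
  is_mx_derive (fun s => F s *m G s) (F' *m G t + F t *m G').
Proof.
move=> dF dG i j; rewrite !mxE -big_split /=.
have -> : (fun s => (F s *m G s) i j) =
    \sum_(a < k) ((fun s => F s i a) * (fun s => G s a j)).
  by apply/funext => s; rewrite mxE fct_sumE.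
apply: is_derive_sum => a; apply: is_derive_eq; first exact: is_deriveM.
by rewrite /GRing.scale /= addrC mulrC [G t a j * _]mulrC.
Qed.

Lemma is_mx_derive_row m k1 k2 (A : R -> 'M[R]_(m, k1)) (B : R -> 'M[R]_(m, k2)) A' B' :
  is_mx_derive A A' -> is_mx_derive B B' ->
  is_mx_derive (fun s => row_mx (A s) (B s)) (row_mx A' B').
Proof.
move=> dA dB i j; rewrite mxE.
under eq_fun do rewrite mxE.
by case: (fintype.split j).
Qed.

Lemma is_mx_derive_col m1 m2 k (A : R -> 'M[R]_(m1, k)) (B : R -> 'M[R]_(m2, k)) A' B' :
  is_mx_derive A A' -> is_mx_derive B B' ->
  is_mx_derive (fun s => col_mx (A s) (B s)) (col_mx A' B').
Proof.
move=> dA dB i j; rewrite mxE.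
under eq_fun do rewrite mxE.
by case: (fintype.split i).
Qed.

Lemma is_mx_derive_block m1 m2 k1 k2
  (A : R -> 'M[R]_(m1, k1)) (B : R -> 'M[R]_(m1, k2))
  (C : R -> 'M[R]_(m2, k1)) (D : R -> 'M[R]_(m2, k2)) A' B' C' D' :
  is_mx_derive A A' -> is_mx_derive B B' -> is_mx_derive C C' -> is_mx_derive D D' ->
  is_mx_derive (fun s => block_mx (A s) (B s) (C s) (D s)) (block_mx A' B' C' D').
Proof. by move=> dA dB dC dD; apply: is_mx_derive_col; apply: is_mx_derive_row. Qed.

End MatrixDerivative.

Ltac mx_expand :=
  repeat progress (
    rewrite ?[(_ + _)^T]linearD ?[(_ - _)^T]linearB ?[(- _)^T]linearN
            ?[(_ *: _)^T]linearZ /=;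
    rewrite ?(scalerDr, scalerN, scalerBr, scalerA, mulmxDl, mulmxDr, mulmxN, mulNmx,
      mulmxBl, mulmxBr, trmxK, trmx_mul);
    rewrite -?scalemxAl -?scalemxAr -?mulmxA).

(* Matrix products become opaque atoms, so that [field] only sees their entries. *)
Ltac mx_field :=
  repeat match goal with |- context [@mulmx ?S ?a ?b ?c ?A ?B] =>
    let M := fresh "M" in set M := @mulmx S a b c A B; clearbody M end;
  let i := fresh "i" in let j := fresh "j" in
  apply/matrixP => i j; rewrite !mxE;
  match goal with |- @eq _ ?a ?b => change (@eq (Real.sort _) a b) end;
  field; rewrite ?pnatr_eq0 //.

Section LaxPair.
Variables (R : realType) (n r : nat).
Implicit Types (x p q G : 'M[R]_(n, r)) (kappa lam : R).

Definition Sigma x p : 'M[R]_r := x^T *m p + p^T *m x.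

Lemma PhiB x p q : Phi x (p - q) = Phi x p - Phi x q.
Proof. rewrite /Phi; mx_expand; mx_field. Qed.

Lemma SigmaB x p q : Sigma x (p - q) = Sigma x p - Sigma x q.
Proof. rewrite /Sigma; mx_expand; mx_field. Qed.

Lemma Phi_Sigma_eq0 x d : x^T *m x = 1%:M -> Phi x d = 0 -> Sigma x d = 0 -> d = 0.
Proof.
move=> xx /eqP; rewrite subr_eq0 => /eqP dxx Sigma0.
have dE : d = x *m (d^T *m x) by rewrite mulmxA -dxx -mulmxA xx mulmx1.
have xd_sym : x^T *m d = d^T *m x by rewrite {1}dE mulmxA xx mul1mx.
have /eqP : 2%:R *: (d^T *m x) = 0 by rewrite -Sigma0 /Sigma xd_sym scaler_nat mulr2n.
rewrite scaler_eq0 pnatr_eq0 /= => /eqP dx0.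
by rewrite dE dx0 mulmx0.
Qed.

Lemma Phi_Sigma_inj x p q : x^T *m x = 1%:M ->
  Phi x p = Phi x q -> Sigma x p = Sigma x q -> p = q.
Proof.
move=> xx ePhi eSigma; apply/eqP; rewrite -subr_eq0; apply/eqP.
by apply: (Phi_Sigma_eq0 xx); rewrite ?PhiB ?SigmaB ?ePhi ?eSigma subrr.
Qed.

Lemma Xdot_rhs_Phi_Psi kappa x p : x^T *m x = 1%:M -> Sigma x p = 0 ->
  Xdot_rhs kappa x p = Phi x p *m x + kappa *: (x *m Psi x p).
Proof.
move=> xx /eqP; rewrite addr_eq0 => /eqP xp.
rewrite /Phi /Psi /Xdot_rhs; mx_expand; rewrite xx xp mulmx1; mx_expand; mx_field.
Qed.

Lemma Phi_flow kappa G x p :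
  Phi (Xdot_rhs kappa x p) p + Phi x (Pdot_rhs kappa G x p) = - Phi x G.
Proof. rewrite /Phi /Xdot_rhs /Pdot_rhs /Lambda; mx_expand; mx_field. Qed.

Lemma Psi_flow kappa G x p : x^T *m x = 1%:M ->
  Psi (Xdot_rhs kappa x p) p + Psi x (Pdot_rhs kappa G x p) = - Psi x G.
Proof.
move=> xx; have xxM k (M : 'M[R]_(r, k)) : x^T *m (x *m M) = M.
  by rewrite mulmxA xx mul1mx.
rewrite /Psi /Xdot_rhs /Pdot_rhs /Lambda; mx_expand.
by rewrite ?xxM xx ?mulmx1; mx_expand; mx_field.
Qed.

Lemma Sigma_flow kappa G x p : x^T *m x = 1%:M ->
  Sigma (Xdot_rhs kappa x p) p + Sigma x (Pdot_rhs kappa G x p) = 0.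
Proof.
move=> xx; have xxM k (M : 'M[R]_(r, k)) : x^T *m (x *m M) = M.
  by rewrite mulmxA xx mul1mx.
rewrite /Sigma /Xdot_rhs /Pdot_rhs /Lambda; mx_expand.
by rewrite ?xxM xx ?mulmx1; mx_expand; mx_field.
Qed.

Lemma commutator_Lmat_Amat kappa G lam x p :
  let Y := Phi x p *m x + kappa *: (x *m Psi x p) in
  Lmat kappa G lam x p *m Amat kappa G lam x p
    - Amat kappa G lam x p *m Lmat kappa G lam x p =
  block_mx (lam *: Phi x G) Y (- Y^T) (- (lam *: Psi x G)).
Proof.
rewrite /Lmat /Amat !mulmx_block opp_block_mx add_block_mx /Phi /Psi.
by mx_expand; congr block_mx; mx_field.
Qed.

End LaxPair.

Section Curves.
Variables (R : realType) (n r : nat) (t : R).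
Implicit Types X P : R -> 'M[R]_(n, r).

Lemma is_mx_derive_Phi X P (X' P' : 'M[R]_(n, r)) :
  is_mx_derive t X X' -> is_mx_derive t P P' ->
  is_mx_derive t (fun s => Phi (X s) (P s)) (Phi X' (P t) + Phi (X t) P').
Proof.
move=> dX dP.
suff -> : Phi X' (P t) + Phi (X t) P' =
    P' *m (X t)^T + P t *m X'^T - (X' *m (P t)^T + X t *m P'^T).
  exact: is_mx_deriveB (is_mx_deriveM dP (is_mx_derive_tr dX))
                       (is_mx_deriveM dX (is_mx_derive_tr dP)).
rewrite /Phi; mx_expand; mx_field.
Qed.

Lemma is_mx_derive_Psi X P (X' P' : 'M[R]_(n, r)) :
  is_mx_derive t X X' -> is_mx_derive t P P' ->
  is_mx_derive t (fun s => Psi (X s) (P s)) (Psi X' (P t) + Psi (X t) P').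
Proof.
move=> dX dP.
suff -> : Psi X' (P t) + Psi (X t) P' =
    X'^T *m P t + (X t)^T *m P' - (P'^T *m X t + (P t)^T *m X').
  exact: is_mx_deriveB (is_mx_deriveM (is_mx_derive_tr dX) dP)
                       (is_mx_deriveM (is_mx_derive_tr dP) dX).
rewrite /Psi; mx_expand; mx_field.
Qed.

Lemma is_mx_derive_Sigma X P (X' P' : 'M[R]_(n, r)) :
  is_mx_derive t X X' -> is_mx_derive t P P' ->
  is_mx_derive t (fun s => Sigma (X s) (P s)) (Sigma X' (P t) + Sigma (X t) P').
Proof.
move=> dX dP.
suff -> : Sigma X' (P t) + Sigma (X t) P' =
    X'^T *m P t + (X t)^T *m P' + (P'^T *m X t + (P t)^T *m X').
  exact: is_mx_deriveD (is_mx_deriveM (is_mx_derive_tr dX) dP)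
                       (is_mx_deriveM (is_mx_derive_tr dP) dX).
rewrite /Sigma; mx_expand; mx_field.
Qed.

Lemma mx_deriv_Lmat kappa G lam X P : mx_derivable X -> mx_derivable P ->
  let X' := mx_deriv X t in let P' := mx_deriv P t in
  mx_deriv (fun s => Lmat kappa G lam (X s) (P s)) t =
  block_mx (- (lam *: (Phi X' (P t) + Phi (X t) P'))) X' (- X'^T)
           ((lam * kappa) *: (Psi X' (P t) + Psi (X t) P')).
Proof.
move=> /(mx_derivableP t) dX /(mx_derivableP t) dP /=.
apply: is_mx_derive_mx_deriv.
have := is_mx_derive_block
  (is_mx_deriveN (is_mx_deriveZ lam (is_mx_derive_Phi dX dP)))
  (is_mx_deriveD dX (is_mx_deriveZ (lam ^+ 2) (is_mx_derive_cst t G)))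
  (is_mx_deriveB (is_mx_deriveN (is_mx_derive_tr dX))
                 (is_mx_deriveZ (lam ^+ 2) (is_mx_derive_cst t G^T)))
  (is_mx_deriveZ (lam * kappa) (is_mx_derive_Psi dX dP)).
by rewrite !scaler0 addr0 subr0.
Qed.

Lemma Sigma_deriv_eq0 X P : mx_derivable X -> mx_derivable P ->
  (forall s, Sigma (X s) (P s) = 0) ->
  Sigma (mx_deriv X t) (P t) + Sigma (X t) (mx_deriv P t) = 0.
Proof.
move=> /(mx_derivableP t) dX /(mx_derivableP t) dP Sigma0.
rewrite -(is_mx_derive_mx_deriv (is_mx_derive_Sigma dX dP)).
under eq_fun do rewrite Sigma0.
exact: is_mx_derive_mx_deriv (is_mx_derive_cst t 0).
Qed.

End Curves.

(* The hypothesis [-1 < kappa] only makes the Jensen metric Riemannian; the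
   equivalence itself is purely algebraic and does not use it. *)
Theorem theorem4 (R : realType) (n r : nat) (kappa : R) (Gamma : 'M[R]_(n, r))
  (X P : R -> 'M[R]_(n, r)) :
  -1 < kappa ->
  (kappa = 1 \/ Gamma = 0) ->
  (forall t, in_TVstar (X t) (P t)) ->
  mx_derivable X -> mx_derivable P ->
  ((forall t, mx_deriv X t = Xdot_rhs kappa (X t) (P t) /\
              mx_deriv P t = Pdot_rhs kappa Gamma (X t) (P t))
   <->
   (forall lam t,
      mx_deriv (fun s => Lmat kappa Gamma lam (X s) (P s)) t =
      Lmat kappa Gamma lam (X t) (P t) *m Amat kappa Gamma lam (X t) (P t)
      - Amat kappa Gamma lam (X t) (P t) *m Lmat kappa Gamma lam (X t) (P t))).
Proof.
move=> _ kappa1_or_Gamma0 onTV dX dP.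
have Sigma0 s : Sigma (X s) (P s) = 0 by case: (onTV s).
split=> [flow lam t | Lax t]; have [XX _] := onTV t.
- have [dXE dPE] := flow t.
  rewrite mx_deriv_Lmat // commutator_Lmat_Amat /= dXE dPE Phi_flow Psi_flow //.
  rewrite -Xdot_rhs_Phi_Psi // scalerN opprK.
  congr block_mx; case: kappa1_or_Gamma0 => [-> | ->]; first by rewrite mulr1 scalerN.
  by rewrite /Psi trmx0 mul0mx mulmx0 subrr oppr0 !scaler0 oppr0.
- have := Lax 1 t; rewrite mx_deriv_Lmat // commutator_Lmat_Amat /=.
  rewrite -Xdot_rhs_Phi_Psi // !scale1r => /eq_block_mx [ePhi eX _ _].
  split=> //; apply: (Phi_Sigma_inj XX).
  + apply: (addrI (Phi (mx_deriv X t) (P t))).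
    by rewrite -[LHS]opprK ePhi {1}eX Phi_flow.
  + apply: (addrI (Sigma (mx_deriv X t) (P t))).
    by rewrite Sigma_deriv_eq0 // {1}eX Sigma_flow.
Qed.
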